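(* Let $\mathcal{L}$ be a finite geometric lattice, $\mathcal{G}$ a building set of $\mathcal{L}$, and $G\in\mathcal{G}$. Then $\mathcal{G}\setminus\{G\}$ is a building set of $\mathcal{L}$ if and only if the join map \[ \prod_{F\in\max(\mathcal{G}\setminus\{G\})_{\leqslant G}}[\hat0,F]\to[\hat0,G],\qquad (H_F)_F\mapsto\bigvee_F H_F, \] is an isomorphism of posets.
   Context: For $\mathcal{H}\subseteq\mathcal{L}$ and $F\in\mathcal{L}$, $\mathcal{H}_{\leqslant F}=\{H\in\mathcal{H}:H\leqslant F\}$ and $\max\mathcal{H}_{\leqslant F}$ is its set of maximal elements. A building set of $\mathcal{L}$ is $\mathcal{G}\subseteq\mathcal{L}\setminus\{\hat0\}$ such that for every $F\neq\hat0$ the join map $\prod_{H\in\max\mathcal{G}_{\leqslant F}}[\hat0,H]\to[\hat0,F]$ is a poset isomorphism. *)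

From HB Require Import structures.
From mathcomp Require Import all_boot all_order.
Set Implicit Arguments. Unset Strict Implicit. Unset Printing Implicit Defensive.
Import Order.TTheory.
Local Open Scope order_scope.

Section Defs.
Context {disp : Order.disp_t} {L : finTBLatticeType disp}.

Definition covers (x y : L) : bool :=
  (x < y) && [forall z : L, ~~ ((x < z) && (z < y))].

Definition atom (a : L) : bool := covers \bot a.

Definition atomistic : Prop :=
  forall x : L, x = \join_(a : L | atom a && (a <= x)) a.

Definition semimodular : Prop :=
  forall a b : L, covers (a `&` b) a -> covers (a `&` b) b ->
    covers a (a `|` b) && covers b (a `|` b).

Definition geometric : Prop := atomistic /\ semimodular.

Definition max_le (H : {set L}) (F : L) : {set L} :=
  [set X in H | (X <= F) &&
     [forall Y in H, ((Y <= F) && (X <= Y)) ==> (X == Y)]].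

(* elements of the product prod_{H in M} [\bot, H], represented as finite
   functions supported on M *)
Definition in_prod (M : {set L}) (f : {ffun L -> L}) : Prop :=
  (forall H, H \in M -> f H <= H) /\ (forall H, H \notin M -> f H = \bot).

Definition join_map (M : {set L}) (f : {ffun L -> L}) : L :=
  \join_(H in M) f H.

Definition join_iso (M : {set L}) (F : L) : Prop :=
  [/\ forall f, in_prod M f -> join_map M f <= F,
      forall x, x <= F -> exists2 f, in_prod M f & join_map M f = x &
      forall f g, in_prod M f -> in_prod M g ->
        ((forall H, H \in M -> f H <= g H) <-> join_map M f <= join_map M g)].

Definition building_set (GG : {set L}) : Prop :=
  \bot \notin GG /\
  forall F : L, F != \bot -> join_iso (max_le GG F) F.

End Defs.

(* If G is maximal in GG below F, distinct maximal elements of GG below F can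
   only meet in \bot, which is not in GG; hence the maximal elements of GG \ G
   below F are those of GG other than G together with the maximal elements of
   GG \ G below G.  The product over this family maps onto the product over
   max GG_{<= F} by collapsing the factors below G into the G-coordinate, so the
   join isomorphism for F factors through the one for G.  If G is not maximal
   below F, removing it does not change the maximal elements. *)

From HB Require Import structures.
From mathcomp Require Import all_boot all_order.
Import Order.TTheory.

Set Implicit Arguments.
Unset Strict Implicit.
Unset Printing Implicit Defensive.
Local Open Scope order_scope.

Section JoinIso.
Context {disp : Order.disp_t} {L : finTBLatticeType disp}.
Implicit Types (M : {set L}) (F G H X Y : L) (f g : L -> L).

Definition restrict M f : {ffun L -> L} :=
  [ffun H => if H \in M then f H else \bot].

Lemma in_prod_restrict M f :
  {in M, forall H, f H <= H} -> in_prod M (restrict M f).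
Proof.
by move=> fM; split=> H; rewrite ffunE; [move=> HM; rewrite HM fM | move/negbTE->].
Qed.

Lemma join_map_restrict M f : join_map M (restrict M f) = \join_(H in M) f H.
Proof. by apply: eq_bigr => H HM; rewrite ffunE HM. Qed.

Lemma join_iso_bound M F f :
  join_iso M F -> {in M, forall H, f H <= H} -> \join_(H in M) f H <= F.
Proof.
by move=> [le_F _ _] fM; rewrite -join_map_restrict; apply/le_F/in_prod_restrict.
Qed.

Lemma join_iso_le M F f g :
  join_iso M F -> {in M, forall H, f H <= H} -> {in M, forall H, g H <= H} ->
  {in M, forall H, f H <= g H} <-> \join_(H in M) f H <= \join_(H in M) g H.
Proof.
move=> [_ _ iso] fM gM; rewrite -!join_map_restrict.
apply: iff_trans (iso _ _ (in_prod_restrict fM) (in_prod_restrict gM)).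
by split=> fg H HM; have := fg H HM; rewrite !ffunE HM.
Qed.

Lemma join_iso_disjoint M F G1 G2 X :
  join_iso M F -> G1 \in M -> G2 \in M -> G1 != G2 -> X <= G1 -> X <= G2 ->
  X = \bot.
Proof.
move=> isoM G1M G2M neqG XG1 XG2.
pose single G H := if H == G then X else \bot.
have singleM G : G \in M -> X <= G -> {in M, forall H, single G H <= H}.
  by move=> GM XG H _; rewrite /single; case: eqP => [->|].
have join_single G : G \in M -> \join_(H in M) single G H = X.
  move=> GM; rewrite (big_setD1 G) //= /single eqxx big1 ?joinx0 //.
  by move=> H; rewrite in_setD1 => /andP[/negbTE->].
have := join_iso_le isoM (singleM _ G2M XG2) (singleM _ G1M XG1).
rewrite !join_single // lexx => /proj2/(_ isT)/(_ G2 G2M).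
by rewrite /single eqxx eq_sym (negbTE neqG) lex0 => /eqP.
Qed.

Section Collapse.
Variables (A B : {set L}) (F G : L).
Hypotheses (isoA : join_iso A F) (isoB : join_iso B G) (GA : G \in A).

Definition collapse f H :=
  if H == G then \join_(K in B) f K else if H \in A then f H else \bot.

Let C := (A :\ G) :|: B.

Lemma collapse_bound f :
  {in C, forall H, f H <= H} -> {in A, forall H, collapse f H <= H}.
Proof.
move=> fC H HA; rewrite /collapse; case: eqP => [->|/eqP nHG].
  by apply: join_iso_bound isoB _ => K KB; rewrite fC // inE KB orbT.
by rewrite HA fC // !inE nHG HA.
Qed.

Lemma join_collapse f : \join_(H in A) collapse f H = \join_(H in C) f H.
Proof.
rewrite (big_setD1 G) // joins_setU joinC /collapse eqxx; congr (_ `|` _).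
by apply: eq_bigr => H; rewrite in_setD1 => /andP[/negbTE-> ->].
Qed.

Lemma le_collapse f g :
  {in C, forall H, f H <= H} -> {in C, forall H, g H <= H} ->
  {in C, forall H, f H <= g H} <-> {in A, forall H, collapse f H <= collapse g H}.
Proof.
move=> fC gC; have sBC : {subset B <= C} by move=> K KB; rewrite inE KB orbT.
have leB := join_iso_le isoB (sub_in1 sBC fC) (sub_in1 sBC gC).
split=> [fg H HA | fg H].
  rewrite /collapse; case: eqP => [_|/eqP nHG]; first by apply/leB => K /sBC/fg.
  by rewrite HA fg // !inE nHG HA.
rewrite !inE => /orP[/andP[nHG HA] | HB].
  by have := fg H HA; rewrite /collapse (negbTE nHG) HA.
by have := fg G GA; rewrite /collapse eqxx => /leB/(_ H HB).
Qed.

Hypothesis disjAB : [disjoint A & B].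

Lemma join_iso_collapse : join_iso C F.
Proof.
have [_ surjA _] := isoA; have [_ surjB _] := isoB.
split.
- move=> h [hC _]; rewrite /join_map -join_collapse.
  exact: join_iso_bound isoA (collapse_bound hC).
- move=> x xF; have [f [fA _] <-] := surjA x xF.
  have [g [gB _] gG] := surjB (f G) (fA G GA).
  pose k H := if H \in B then g H else f H.
  have kC : {in C, forall H, k H <= H}.
    move=> H; rewrite !inE /k; case: ifP => [HB _|_]; first exact: gB.
    by rewrite orbF => /andP[_ /fA].
  exists (restrict C k); first exact: in_prod_restrict.
  rewrite join_map_restrict -join_collapse; apply: eq_bigr => H HA.
  rewrite /collapse /k (disjointFr disjAB HA) HA; case: eqP => [->|//].
  by rewrite -gG; apply: eq_bigr => K ->.
- move=> h1 h2 [h1C _] [h2C _]; rewrite /join_map -!join_collapse.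
  apply: iff_trans (le_collapse h1C h2C) _.
  exact: join_iso_le isoA (collapse_bound h1C) (collapse_bound h2C).
Qed.

End Collapse.

End JoinIso.

Section MaxLe.
Context {disp : Order.disp_t} {L : finTBLatticeType disp}.
Implicit Types (S : {set L}) (F G X Y Z : L).

Lemma max_leP S F X :
  reflect [/\ X \in S, X <= F & forall Y, Y \in S -> Y <= F -> X <= Y -> X = Y]
          (X \in max_le S F).
Proof.
rewrite /max_le inE.
apply: (iffP andP) => [[XS /andP[XF /forall_inP Xmax]] | [XS XF Xmax]].
  by split=> // Y YS YF XY; apply/eqP/(implyP (Xmax Y YS)); rewrite YF XY.
split; rewrite // XF; apply/forall_inP => Y YS.
by apply/implyP => /andP[YF XY]; rewrite (Xmax Y).
Qed.
Arguments max_leP {S F X}.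

Lemma max_le_above S F Y :
  Y \in S -> Y <= F -> exists2 M, M \in max_le S F & Y <= M.
Proof.
move=> YS YF; pose P Z := [&& Z \in S, Y <= Z & Z <= F].
have PY : P Y by rewrite /P YS lexx YF.
case: (arg_maxnP (fun Z => #|[set W | W <= Z]|) PY) => M /and3P[MS YM MF] Mmax.
exists M => //; apply/max_leP; split=> // Z ZS ZF MZ.
have: [set W | W <= M] == [set W | W <= Z].
  rewrite eqEcard; apply/andP; split.
    by apply/subsetP => W; rewrite !inE => /le_trans; apply.
  by apply: Mmax; rewrite /P ZS (le_trans YM MZ) ZF.
by move/eqP/setP/(_ Z); rewrite !inE lexx => ZM; apply/eqP; rewrite eq_le MZ ZM.
Qed.

Lemma max_le_setD1_nonmax S F G :
  G \notin max_le S F -> max_le (S :\ G) F = max_le S F.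
Proof.
move=> GnmaxF; apply/setP => X; apply/max_leP/max_leP => [[] | [XS XF Xmax]].
  rewrite in_setD1 => /andP[nXG XS] XF Xmax; split=> // Y YS YF XY.
  have [YG | nYG] := eqVneq Y G; last by apply: Xmax; rewrite ?in_setD1 ?nYG.
  rewrite YG in YS YF XY.
  have [M MmaxF GM] := max_le_above YS YF; have [MS MF _] := max_leP MmaxF.
  have nMG : M != G by apply: contraNneq GnmaxF => <-.
  have XM : X = M by apply: Xmax; rewrite ?in_setD1 ?nMG ?(le_trans XY GM).
  by case/eqP: nMG; apply: le_anti; rewrite GM -XM XY.
have nXG : X != G by apply: contraNneq GnmaxF => <-; apply/max_leP.
split; rewrite ?in_setD1 ?nXG // => Y; rewrite in_setD1 => /andP[_]; exact: Xmax.
Qed.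

Lemma max_le_setD1_max S F G :
  \bot \notin S -> join_iso (max_le S F) F -> G \in max_le S F ->
  max_le (S :\ G) F = (max_le S F :\ G) :|: max_le (S :\ G) G.
Proof.
move=> botS isoS GmaxF; have [GS GF _] := max_leP GmaxF.
apply/setP => X; rewrite in_setU in_setD1; apply/max_leP/idP => [[] | ].
  rewrite in_setD1 => /andP[nXG XS] XF Xmax.
  have [XG | nXG'] := boolP (X <= G); apply/orP; [right | left; rewrite nXG].
    apply/max_leP; split; rewrite ?in_setD1 ?nXG // => Y YS YG.
    exact: Xmax YS (le_trans YG GF).
  apply/max_leP; split=> // Y YS YF XY.
  by apply: Xmax; rewrite // in_setD1 YS andbT; apply: contraNneq nXG' => <-.
case/orP => [/andP[nXG /max_leP[XS XF Xmax]] | /max_leP[XS' XG Xmax]].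
  split; rewrite ?in_setD1 ?nXG // => Y; rewrite in_setD1 => /andP[_]; exact: Xmax.
split=> //; first exact: le_trans XG GF.
move=> Y YS' YF XY; move: (YS'); rewrite in_setD1 => /andP[_ YS].
have [M MmaxF YM] := max_le_above YS YF.
have [MG | nMG] := eqVneq M G; first by apply: Xmax; rewrite // -MG.
have X0 := join_iso_disjoint isoS MmaxF GmaxF nMG (le_trans XY YM) XG.
by move: XS'; rewrite in_setD1 X0 (negbTE botS) andbF.
Qed.

Lemma max_le_disjoint S F G :
  G \in max_le S F -> [disjoint max_le S F & max_le (S :\ G) G].
Proof.
move=> GmaxF; have [GS GF _] := max_leP GmaxF.
rewrite disjoint_subset; apply/subsetP => X /max_leP[_ _ Xmax]; rewrite inE.
apply/negP => /max_leP[]; rewrite in_setD1 => /andP[nXG _] XG _.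
by move: nXG; rewrite (Xmax G) ?eqxx.
Qed.

End MaxLe.

Theorem lemma2p26 (d : Order.disp_t) (L : finTBLatticeType d)
  (GG : {set L}) (G : L) :
  geometric (L := L) -> building_set GG -> G \in GG ->
  (building_set (GG :\ G) <-> join_iso (max_le (GG :\ G) G) G).
Proof.
move=> _ [botGG isoGG] GGG.
split=> [[_ isoGG'] | isoG].
  by apply: isoGG'; apply: contraNneq botGG => <-.
split=> [|F nFbot]; first by rewrite in_setD1 negb_and botGG orbT.
have [GmaxF | GnmaxF] := boolP (G \in max_le GG F).
  rewrite max_le_setD1_max //; last exact: isoGG.
  apply: join_iso_collapse (isoGG F nFbot) isoG GmaxF (max_le_disjoint GmaxF).
by rewrite max_le_setD1_nonmax //; apply: isoGG.
Qed.
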